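(* For $1\le i\le s$ let ${\mathcal B}_i$ be a finite $w_{\mathfrak P_i}$-reduced family of nonzero elements of $L$, and let $z_i\in L^*$ be such that for every $b\in{\mathcal B}_i$, $$w_{\mathfrak P_i}(z_ib)<w_{\mathfrak P_j}(z_ib)\quad\text{for all } j\in\{1,\dots,s\}\setminus\{i\}.$$ Then the family $\bigcup_{i=1}^s z_i{\mathcal B}_i=(z_ib)_{1\le i\le s,\ b\in{\mathcal B}_i}$ is $w_S$-reduced.
   Context: Let $A$ be a Dedekind domain with fraction field $K$, $\mathfrak p$ a nonzero prime ideal with valuation $v_\mathfrak p$. Let $f\in A[x]$ be monic irreducible separable, $\theta$ a root, $L=K(\theta)$, $\mathcal O$ the integral closure of $A$ in $L$, and $S=\{\mathfrak P_1,\dots,\mathfrak P_s\}$ the set of all primes of $\mathcal O$ over $\mathfrak p$, with ramification indices $e_i$ and normalized valuations $v_{\mathfrak P_i}$; $w_{\mathfrak P_i}=v_{\mathfrak P_i}/e_i$ and $w_S(z)=\min_iw_{\mathfrak P_i}(z)$. A finite family ${\mathcal B}\subset L$ is $w$-reduced if $w(\sum_b\lambda_bb)=\min_bw(\lambda_bb)$ for all $\lambda_b\in K$. *)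

From HB Require Import structures.
From mathcomp Require Import all_boot all_order all_algebra all_field.
Set Implicit Arguments. Unset Strict Implicit. Unset Printing Implicit Defensive.
Import Order.TTheory GRing.Theory Num.Theory.
Local Open Scope ring_scope.

(* Value group Q together with +infinity (the value of 0). *)
Inductive ext := Fin of rat | Inf.

Definition eadd (x y : ext) : ext :=
  match x, y with Fin a, Fin b => Fin (a + b) | _, _ => Inf end.
Definition ele (x y : ext) : bool :=
  match x, y with
  | Fin a, Fin b => (a <= b)%R
  | _, Inf => true
  | Inf, Fin _ => false
  end.
Definition elt (x y : ext) : bool :=
  match x, y with
  | Fin a, Fin b => (a < b)%R
  | Fin _, Inf => true
  | Inf, _ => false
  end.
Definition emin (x y : ext) : ext := if ele x y then x else y.
Definition eminl (s : seq ext) : ext := foldr emin Inf s.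

Definition is_valuation (R : nzRingType) (w : R -> ext) : Prop :=
  [/\ forall x, w x = Inf <-> x = 0,
      forall x y, w (x * y) = eadd (w x) (w y)
    & forall x y, ele (emin (w x) (w y)) (w (x + y))].

Definition is_normalized_discrete_valuation (K : fieldType) (v : K -> ext) : Prop :=
  [/\ is_valuation v,
      forall x, x != 0 -> exists n : int, v x = Fin (n%:~R)
    & exists x, v x = Fin 1].

Definition extends (K : fieldType) (L : fieldExtType K) (w : L -> ext) (v : K -> ext) :=
  forall a : K, w (a%:A) = v a.

Definition wS (K : fieldType) (L : fieldExtType K) (s : nat) (w : 'I_s -> L -> ext)
  (z : L) : ext := eminl [seq w i z | i <- enum 'I_s].

Definition reduced (K : fieldType) (L : fieldExtType K) (w : L -> ext)
  (I : finType) (F : I -> L) : Prop :=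
  forall lam : I -> K,
    w (\sum_(b : I) lam b *: F b) = eminl [seq w (lam b *: F b) | b <- enum I].

From mathcomp Require Import all_boot all_order all_algebra all_field.
Import Order.TTheory GRing.Theory Num.Theory.
Set Implicit Arguments. Unset Strict Implicit.
Local Open Scope ring_scope.

(* Let t = sum_p lam_p z_i b_p and let p0 = (i0, b0) minimise w_S over the terms.
   Each term is dominated by the valuation of its own block, so its w_S-value is
   its w_i-value.  Split t = t0 + t', where t0 collects the terms of block i0.
   Since z_i0 B_i0 is w_i0-reduced, w_i0(t0) <= w_S(term p0); every term of t'
   has w_i0-value strictly above its w_S-value, hence strictly above the
   minimum.  So w_S(t) <= w_i0(t) = w_i0(t0) <= min_p w_S(term p), and the
   reverse inequality is ultrametric. *)

Lemma ele_refl x : ele x x.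
Proof. by case: x => //= a; rewrite lexx. Qed.

Lemma ele_trans x y t : ele x y -> ele y t -> ele x t.
Proof. by case: x; case: y; case: t => //= a b c; apply: le_trans. Qed.

Lemma ele_anti x y : ele x y -> ele y x -> x = y.
Proof. by case: x; case: y => //= a b H1 H2; congr Fin; apply/eqP; rewrite eq_le H1 H2. Qed.

Lemma ele_total x y : ele x y || ele y x.
Proof. by case: x; case: y => //= a b; apply: le_total. Qed.

Lemma elt_ele x y : elt x y -> ele x y.
Proof. by case: x; case: y => //= a b; apply: ltW. Qed.

Lemma elt_ele_trans x y t : elt x y -> ele y t -> elt x t.
Proof. by case: x; case: y; case: t => //= a b c; apply: lt_le_trans. Qed.

Lemma ele_elt_trans x y t : ele x y -> elt y t -> elt x t.
Proof. by case: x; case: y; case: t => //= a b c; apply: le_lt_trans. Qed.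

Lemma elt_geF x y : elt x y -> ele y x = false.
Proof. by case: x; case: y => //= a b; rewrite leNgt => ->. Qed.

Lemma ele_emin e a b : ele e a -> ele e b -> ele e (emin a b).
Proof. by rewrite /emin; case: ifP. Qed.

Lemma emin_l a b : ele (emin a b) a.
Proof.
rewrite /emin; case: ifP => [_|H]; first exact: ele_refl.
by move: (ele_total a b); rewrite H.
Qed.

Lemma emin_r a b : ele (emin a b) b.
Proof. by rewrite /emin; case: ifP => // _; apply: ele_refl. Qed.

Lemma eadd_smono c a b : c <> Inf -> elt a b -> elt (eadd c a) (eadd c b).
Proof. by case: c; case: a; case: b => //= x y t _; rewrite ltrD2l. Qed.

Lemma eadd_emin c a b : eadd c (emin a b) = emin (eadd c a) (eadd c b).
Proof.
rewrite /emin; case: c; case: a; case: b => //= x y t.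
by rewrite lerD2l; case: ifP.
Qed.

Lemma eadd_eminl c r : eadd c (eminl r) = eminl [seq eadd c x | x <- r].
Proof. by elim: r => [|a r IH] /=; [case: c | rewrite eadd_emin IH]. Qed.

Lemma eminl_le (T : eqType) (f : T -> ext) r y : y \in r ->
  ele (eminl [seq f x | x <- r]) (f y).
Proof.
elim: r => //= a r IH; rewrite inE => /orP[/eqP->|/IH H]; first exact: emin_l.
exact: ele_trans (emin_r _ _) H.
Qed.

Lemma eminl_ge (T : eqType) (f : T -> ext) r e :
  (forall y, y \in r -> ele e (f y)) -> ele e (eminl [seq f x | x <- r]).
Proof.
elim: r => [|a r IH] H /=; first by case: e {H}.
apply: ele_emin; first by apply: H; rewrite inE eqxx.
by apply: IH => y Hy; apply: H; rewrite inE Hy orbT.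
Qed.

Lemma eminl_attained (T : eqType) (f : T -> ext) r :
  eminl [seq f x | x <- r] = Inf \/
  exists2 x, x \in r & eminl [seq f x | x <- r] = f x.
Proof.
elim: r => [|a r IH] /=; first by left.
rewrite /emin; case: ifP => _; first by right; exists a; rewrite ?inE ?eqxx.
case: IH => [->|[x xr ->]]; first by left.
by right; exists x; rewrite // inE xr orbT.
Qed.

Section Valuation.
Variables (R : nzRingType) (w : R -> ext).
Hypothesis hw : is_valuation w.

Lemma val0 : w 0 = Inf.
Proof. by case: hw => H _ _; apply/H. Qed.

Lemma val1 : w 1 = Fin 0.
Proof.
case: hw => H M _; have := M 1 1; rewrite mulr1.
case E: (w 1) => [a|] /=; last by move/H: E => /eqP; rewrite oner_eq0.
by case=> /(congr1 (fun t => t - a)); rewrite addrK subrr => <-.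
Qed.

Lemma valN1 : w (-1) = Fin 0.
Proof.
case: hw => H M _; have := M (-1) (-1); rewrite mulrNN mulr1 val1.
case E: (w (-1)) => [a|] //= [] /eqP.
by rewrite eq_sym -mulr2n -mulr_natr mulf_eq0 pnatr_eq0 orbF => /eqP->.
Qed.

Lemma valN x : w (- x) = w x.
Proof.
case: hw => _ M _; rewrite -mulN1r M valN1.
by case: (w x) => //= a; rewrite add0r.
Qed.

Lemma val_sum_ge (I : eqType) (r : seq I) (f : I -> R) e :
  (forall i, i \in r -> ele e (w (f i))) -> ele e (w (\sum_(i <- r) f i)).
Proof.
case: hw => _ _ T.
elim: r => [|a r IH] H; first by rewrite big_nil val0; case: e {H}.
rewrite big_cons; apply: ele_trans (T _ _); apply: ele_emin.
  by apply: H; rewrite inE eqxx.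
by apply: IH => i Hi; apply: H; rewrite inE Hi orbT.
Qed.

Lemma val_sum_gt (I : eqType) (r : seq I) (f : I -> R) c :
  (forall i, i \in r -> elt (Fin c) (w (f i))) -> elt (Fin c) (w (\sum_(i <- r) f i)).
Proof.
case: hw => _ _ T.
elim: r => [|a r IH] H; first by rewrite big_nil val0.
rewrite big_cons; apply: elt_ele_trans (T _ _).
rewrite /emin; case: ifP => _; first by apply: H; rewrite inE eqxx.
by apply: IH => i Hi; apply: H; rewrite inE Hi orbT.
Qed.

Lemma valD_lt a b : elt (w a) (w b) -> w (a + b) = w a.
Proof.
case: hw => _ _ T lt_ab; apply: ele_anti; last first.
  by have := T a b; rewrite /emin (elt_ele lt_ab).
have := T (a + b) (- b); rewrite addrK valN /emin.
by case: ifP => // _; rewrite (elt_geF lt_ab).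
Qed.

End Valuation.

Section Extension.
Variables (K : fieldType) (L : fieldExtType K) (w : L -> ext) (v : K -> ext).
Hypotheses (hw : is_valuation w) (hwv : extends w v).

Lemma valZ k y : w (k *: y) = eadd (v k) (w y).
Proof. by case: hw => _ M _; rewrite -mulr_algl M hwv. Qed.

Lemma extends_val_fin k : k != 0 -> v k <> Inf.
Proof.
move=> k0; rewrite -hwv; case: hw => H _ _ /H /eqP.
by rewrite scaler_eq0 oner_eq0 orbF (negbTE k0).
Qed.

Lemma reduced_le (I : finType) (F : I -> L) (lam : I -> K) b :
  reduced w F -> ele (w (\sum_i lam i *: F i)) (w (lam b *: F b)).
Proof.
move->; exact: (eminl_le (fun i => w (lam i *: F i))) (mem_enum _ _).
Qed.

Lemma reduced_mull (I : finType) (F : I -> L) x :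
  reduced w F -> reduced w (fun i => x * F i).
Proof.
case: hw => _ M _ redF lam.
under eq_bigr do rewrite scalerAr.
rewrite -mulr_sumr M redF eadd_eminl -map_comp.
by congr eminl; apply: eq_map => i /=; rewrite scalerAr M.
Qed.

End Extension.

Lemma big_tag_eq (R : Type) (idx : R) (op : Monoid.com_law idx) (I : finType)
    (J : I -> finType) (i : I) (f : {i : I & J i} -> R) :
  \big[op/idx]_(p | tag p == i) f p = \big[op/idx]_(b : J i) f (Tagged J b).
Proof.
transitivity (\big[op/idx]_(j | j == i) \big[op/idx]_(b : J j) f (Tagged J b)).
  rewrite (sig_big_dep _ _ (fun j b => f (Tagged J b))) /=.
  by apply: eq_big => [[j b]|[j b] _] //=; rewrite andbT.
by rewrite big_pred1_eq.
Qed.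

Section TaggedReduced.
Variables (K : fieldType) (L : fieldExtType K) (v : K -> ext).
Variables (s : nat) (w : 'I_s -> L -> ext).
Hypotheses (hw_val : forall i, is_valuation (w i)) (hw_ext : forall i, extends (w i) v).

Lemma wS_le y j : ele (wS w y) (w j y).
Proof. exact: (eminl_le (fun j => w j y)) (mem_enum _ _). Qed.

Lemma wS_dominant i y :
  (forall j, j != i -> ele (w i y) (w j y)) -> wS w y = w i y.
Proof.
move=> dom; apply: ele_anti; first exact: wS_le.
apply: eminl_ge => j _; have [->|ji] := eqVneq j i; [exact: ele_refl | exact: dom].
Qed.

Lemma wS_sum_ge (T : finType) (f : T -> L) :
  ele (eminl [seq wS w (f p) | p <- enum T]) (wS w (\sum_p f p)).
Proof.
apply: eminl_ge => j _; apply: val_sum_ge => // p _.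
exact: ele_trans (eminl_le (fun p => wS w (f p)) (mem_enum _ p)) (wS_le _ _).
Qed.

Variables (I : 'I_s -> finType) (F : forall i, I i -> L).
Arguments F : clear implicits.
Hypothesis hFred : forall i, reduced (w i) (F i).
Hypothesis hFdom : forall i b j, j != i -> elt (w i (F i b)) (w j (F i b)).

Lemma dominantZ_lt i b j k :
  j != i -> k != 0 -> elt (w i (k *: F i b)) (w j (k *: F i b)).
Proof.
move=> ji k0; rewrite !(valZ (hw_val _) (hw_ext _)).
exact: eadd_smono (extends_val_fin (hw_val i) (hw_ext i) k0) (hFdom b ji).
Qed.

Lemma dominantZ_le i b j k : j != i -> ele (w i (k *: F i b)) (w j (k *: F i b)).
Proof.
move=> ji; have [->|k0] := eqVneq k 0; last exact/elt_ele/dominantZ_lt.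
by rewrite scale0r !val0.
Qed.

Lemma wS_sum_le_min (lam : {i : 'I_s & I i} -> K) p0 :
  let t p := lam p *: F (tag p) (tagged p) in
  (forall p, ele (wS w (t p0)) (wS w (t p))) ->
  ele (wS w (\sum_p t p)) (wS w (t p0)).
Proof.
case: p0 => i0 b0 t minp0.
have wSp0 : wS w (t (Tagged I b0)) = w i0 (t (Tagged I b0)).
  by apply: wS_dominant => j; apply: dominantZ_le.
rewrite wSp0 in minp0 *; apply: ele_trans (wS_le _ i0) _.
case Hc: (w i0 _) minp0 => [c|] minp0; last by case: (w _ _).
have head_le : ele (w i0 (\sum_(p | tag p == i0) t p)) (Fin c).
  by rewrite big_tag_eq -Hc; apply: reduced_le.
have tail_gt : elt (Fin c) (w i0 (\sum_(p | tag p != i0) t p)).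
  rewrite big_mkcond /=; apply: val_sum_gt => // -[j b] _ /=.
  case: ifP => [ji|_]; last by rewrite val0.
  have [l0|l0] := eqVneq (lam (Tagged I b)) 0; first by rewrite /t l0 scale0r val0.
  apply: ele_elt_trans (ele_trans (minp0 (Tagged I b)) (wS_le _ j)) _.
  by apply: dominantZ_lt; rewrite // eq_sym.
by rewrite (bigID (fun p => tag p == i0)) /= valD_lt // (ele_elt_trans head_le tail_gt).
Qed.

Lemma reduced_wS_tagged :
  reduced (wS w) (fun p : {i : 'I_s & I i} => F (tag p) (tagged p)).
Proof.
move=> lam; apply: ele_anti; last exact: wS_sum_ge.
pose t p := lam p *: F (tag p) (tagged p).
have [->|[p0 _ min_p0]] := eminl_attained (fun p => wS w (t p)) (enum {: {i : 'I_s & I i}}).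
  by case: (wS w _).
rewrite min_p0; apply: wS_sum_le_min => p; rewrite -min_p0.
by apply: (eminl_le (fun p => wS w (t p))); rewrite mem_enum.
Qed.

End TaggedReduced.

Theorem mainTheorem8
  (K : fieldType) (L : fieldExtType K)
  (Lsep : separable 1%AS (fullv : {vspace L}))
  (v : K -> ext) (hv : is_normalized_discrete_valuation v)
  (s : nat) (w : 'I_s -> L -> ext)
  (hw_val : forall i, is_valuation (w i))
  (hw_ext : forall i, extends (w i) v)
  (hw_inj : injective w)
  (hw_all : forall w' : L -> ext, is_valuation w' -> extends w' v ->
              exists i, w' = w i)
  (n : 'I_s -> nat) (B : forall i : 'I_s, 'I_(n i) -> L)
  (hB0 : forall i b, B i b != 0)
  (hBred : forall i, reduced (w i) (B i))
  (z : 'I_s -> L) (hz0 : forall i, z i != 0)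
  (hz : forall i b j, j != i -> elt (w i (z i * B i b)) (w j (z i * B i b))) :
  reduced (wS w) (fun p : {i : 'I_s & 'I_(n i)} => z (tag p) * B (tag p) (tagged p)).
Proof.
apply: (reduced_wS_tagged hw_val hw_ext (F := fun i b => z i * B i b)) => //.
by move=> i; apply: reduced_mull.
Qed.
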